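(* Let $\mathcal{A}$ and $\mathcal{B}$ be two stochastic CA with the same set of states $Q$ (and possibly different random alphabets) and explicit global functions $F$ and $G$. If $S_F=S_G$ then $S_F^t=S_G^t$ for all $t\ge1$.
   Context: A stochastic CA is $(Q,R,V,V',f)$ with $Q$ finite states, $R$ finite random symbols, $V=\{v_1,\dots,v_r\}$, $V'=\{v'_1,\dots,v'_{r'}\}$ finite subsets of $\mathbb{Z}$, $f:Q^r\times R^{r'}\to Q$; explicit global function $F(c,s)_z=f((c_{z+v_1},\dots,c_{z+v_r}),(s_{z+v'_1},\dots,s_{z+v'_{r'}}))$. Iterates: $F^0(c)=c$, $F^{t+1}(c,s^1,\dots,s^{t+1})=F(F^t(c,s^1,\dots,s^t),s^{t+1})$. $\nu_R$ is the uniform Bernoulli measure on $R^{\mathbb{Z}}$ and $\nu_{R^t}$ the uniform (product) measure on $(R^{\mathbb{Z}})^t$. For cylinders $[u]_z=\{c:c_{z+x}=u_x,0\le x<|u|\}$: $S_F(c)([u]_z)=\nu_R\{s:F(c,s)\in[u]_z\}$ and $S_F^t(c)([u]_z)=\nu_{R^t}\{(s^1,\dots,s^t): F^t(c,s^1,\dots,s^t)\in[u]_z\}$, which determine Borel probability measures on $Q^{\mathbb{Z}}$. *)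

From mathcomp Require Import all_boot all_order all_algebra.
Set Implicit Arguments. Unset Strict Implicit. Unset Printing Implicit Defensive.
Import Order.TTheory GRing.Theory Num.Theory.
Local Open Scope ring_scope.

(* R is the (finite, nonempty: the uniform measure on R must exist) random
   alphabet, V = [v_1;..;v_r] and V' = [v'_1;..;v'_r'] are finite subsets of Z
   listed without repetition, f : Q^r x R^r' -> Q. *)
Record sca (Q : finType) := Sca {
  sca_R : finType;
  sca_r0 : sca_R;
  sca_V : seq int;
  sca_V' : seq int;
  sca_Vuniq : uniq sca_V;
  sca_V'uniq : uniq sca_V';
  sca_f : (size sca_V).-tuple Q -> (size sca_V').-tuple sca_R -> Q
}.

Definition config (T : Type) := int -> T.

Definition glob (Q : finType) (A : sca Q) (c : config Q) (s : config (sca_R A))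
  : config Q :=
  fun z => sca_f
    [tuple c (z + tnth (in_tuple (sca_V A)) i) | i < size (sca_V A)]
    [tuple s (z + tnth (in_tuple (sca_V' A)) j) | j < size (sca_V' A)].

Definition glob_iter (Q : finType) (A : sca Q) (c : config Q)
  (ss : seq (config (sca_R A))) : config Q :=
  foldl (@glob Q A) c ss.

Definition in_cyl (Q : finType) (u : seq Q) (z : int) (c : config Q) : bool :=
  [forall x : 'I_(size u), c (z + (x : nat)%:Z) == tnth (in_tuple u) x].

Definition sca_rad (Q : finType) (A : sca Q) : nat :=
  \max_(v <- sca_V A ++ sca_V' A) `|v|%N.

(* extend an assignment g of the window [lo, lo+len) to a configuration of Z
   (the value outside the window is irrelevant for the events considered) *)
Definition ext_window (T : Type) (t0 : T) (lo : int) (len : nat)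
  (g : {ffun 'I_len -> T}) : config T :=
  fun i => if lo <= i then
             match insub `|i - lo|%N with Some k => g k | None => t0 end
           else t0.

(* S_F^t(c)([u]_z) = nu_{R^t}{(s^1..s^t) : F^t(c,s^1..s^t) \in [u]_z}.
   The event only depends on the coordinates of each s^k in the window
   W = [z - tM, z + |u| + tM), so its measure under the uniform Bernoulli
   product measure is the proportion of the |R|^(t|W|) assignments of the
   random symbols on W (for each of the t random configurations) realising it. *)
Definition St (Q : finType) (A : sca Q) (t : nat) (c : config Q)
  (u : seq Q) (z : int) : rat :=
  let M := (t * sca_rad A)%N in
  let lo := z - M%:Z in
  let len := (size u + 2 * M)%N in
  (#|[set w : {ffun 'I_t -> {ffun 'I_len -> sca_R A}} |
      in_cyl u z (@glob_iter Q A c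
        [seq ext_window (sca_r0 A) lo (w k) | k <- enum 'I_t])]|%:R
   / (#|sca_R A| ^ (t * len))%:R).

Definition SF (Q : finType) (A : sca Q) (c : config Q) (u : seq Q) (z : int) : rat :=
  St A 1 c u z.

(* Chapman-Kolmogorov: conditioning on the first random configuration s, the
   event F^{t+1}(c) \in [u]_z becomes F^t(F(c,s)) \in [u]_z, which by locality
   only depends on F(c,s) on the window of length |u| + 2tM starting at
   w = z - tM.  Summing over the possible contents v of that window,
     S_F^{t+1}(c)([u]_z) = sum_v S_F(c)([v]_w) * S_F^t(c_v)([u]_z),
   where c_v is any configuration showing v on the window.  Taking M to bound
   the radii of both automata, induction on t transfers S_F = S_G to all
   iterates.  The counting definition of S_F^t is made window-independent by
   the fact that restricting uniformly random symbols to a sub-window keeps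
   them uniform. *)

From mathcomp Require Import all_boot all_order all_algebra zify.
Set Implicit Arguments. Unset Strict Implicit. Unset Printing Implicit Defensive.
Import Order.TTheory GRing.Theory Num.Theory.
Local Open Scope ring_scope.

Lemma card_preim_factor (X Y : finType) (pi : X -> Y) (rho : X -> X)
    (upd : Y -> X -> X) :
  (forall y x, pi (upd y x) = y) -> (forall y x, rho (upd y x) = rho x) ->
  (forall x1 x2, pi x1 = pi x2 -> rho x1 = rho x2 -> x1 = x2) ->
  forall P : pred Y,
  #|[set x | P (pi x)]| = (#|[set y | P y]| * #|[set rho x | x in X]|)%N.
Proof.
move=> piK rhoK pi_rho_inj P.
have inj : injective (fun x => (pi x, rho x)) by move=> x1 x2 [] /pi_rho_inj H /H.
rewrite -cardsX -(card_imset _ inj).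
suff -> : [set (pi x, rho x) | x in [set x | P (pi x)]]
          = setX [set y | P y] [set rho x | x in X] by [].
apply/setP => -[y z].
rewrite in_setX !inE; apply/imsetP/andP.
- by move=> [x]; rewrite inE => Px [-> ->]; split => //; apply: imset_f.
- by move=> [Py /imsetP [x _ ->]]; exists (upd y x); rewrite ?inE ?piK ?rhoK.
Qed.

Section RestrictFfun.
Variables (K I J R : finType) (e : J -> I).
Hypothesis e_inj : injective e.

Definition restrict_ffun (w : {ffun K -> {ffun I -> R}}) : {ffun K -> {ffun J -> R}} :=
  [ffun k => [ffun j => w k (e j)]].

Definition overwrite_ffun (y : {ffun K -> {ffun J -> R}})
    (w : {ffun K -> {ffun I -> R}}) : {ffun K -> {ffun I -> R}} :=
  [ffun k => [ffun i => if [pick j | e j == i] is Some j then y k j else w k i]].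

Lemma restrict_overwrite y w : restrict_ffun (overwrite_ffun y w) = y.
Proof.
apply/ffunP => k; apply/ffunP => j; rewrite !ffunE.
by case: pickP => [j' /eqP/e_inj -> //|/(_ j)]; rewrite eqxx.
Qed.

Lemma overwrite_overwrite y' y w :
  overwrite_ffun y' (overwrite_ffun y w) = overwrite_ffun y' w.
Proof. by apply/ffunP => k; apply/ffunP => i; rewrite !ffunE; case: pickP. Qed.

Lemma restrict_overwrite_inj y0 w1 w2 :
  restrict_ffun w1 = restrict_ffun w2 ->
  overwrite_ffun y0 w1 = overwrite_ffun y0 w2 -> w1 = w2.
Proof.
move=> e1 e2; apply/ffunP => k; apply/ffunP => i.
have := congr1 (fun w : {ffun K -> {ffun I -> R}} => w k i) e2; rewrite !ffunE.
case: pickP => [j /eqP <- _ | _ //].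
by have := congr1 (fun w : {ffun K -> {ffun J -> R}} => w k j) e1; rewrite !ffunE.
Qed.

Lemma ratio_restrict_ffun (r0 : R) (P : pred {ffun K -> {ffun J -> R}}) :
  #|[set w | P (restrict_ffun w)]|%:R / #|{ffun K -> {ffun I -> R}}|%:R
  = #|[set y | P y]|%:R / #|{ffun K -> {ffun J -> R}}|%:R :> rat.
Proof.
pose y0 : {ffun K -> {ffun J -> R}} := [ffun k => [ffun j => r0]].
have factor := card_preim_factor restrict_overwrite (overwrite_overwrite y0)
  (@restrict_overwrite_inj y0).
have setT_restrict : [set w | predT (restrict_ffun w)] = setT.
  by apply/setP => w; rewrite !inE.
have setT_pred : [set y | predT y] = [set: {ffun K -> {ffun J -> R}}].
  by apply/setP => y; rewrite !inE.
rewrite -!cardsT -setT_restrict !factor setT_pred.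
have rho_gt0 : (0 < #|[set overwrite_ffun y0 w | w in {ffun K -> {ffun I -> R}}]|)%N.
  by apply/card_gt0P; exists (overwrite_ffun y0 [ffun k => [ffun i => r0]]); apply: imset_f.
by rewrite !natrM invfM mulrACA divff ?mulr1 // pnatr_eq0 -lt0n.
Qed.

End RestrictFfun.

Lemma card_ffun_window (R : finType) t len :
  #|{ffun 'I_t -> {ffun 'I_len -> R}}| = (#|R| ^ (t * len))%N.
Proof. by rewrite !card_ffun !card_ord mulnC expnM. Qed.

Lemma card_set_indicator (T : finType) (P : pred T) :
  #|[set w | P w]| = (\sum_(w : T) P w)%N.
Proof. by rewrite -sum1_card big_mkcond /=; apply: eq_bigr => w _; rewrite inE. Qed.

Lemma ext_window_offset (T : Type) (t0 : T) lo len (g : {ffun 'I_len -> T})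
    (i : 'I_len) :
  ext_window t0 lo g (lo + (i : nat)%:Z) = g i.
Proof.
rewrite /ext_window.
have -> : lo <= lo + (i : nat)%:Z by lia.
have -> : `|(lo + (i : nat)%:Z - lo)%R|%N = i by lia.
by rewrite valK.
Qed.

Lemma window_index lo len (x : int) : lo <= x -> x < lo + len%:Z ->
  exists i : 'I_len, x = lo + (i : nat)%:Z.
Proof.
move=> lo_x x_hi; have i_lt : (`|(x - lo)%R| < len)%N by lia.
by exists (Ordinal i_lt) => /=; lia.
Qed.

Definition window_prob (R : finType) (r0 : R) (t : nat) (lo : int) (len : nat)
    (P : seq (config R) -> bool) : rat :=
  #|[set w : {ffun 'I_t -> {ffun 'I_len -> R}} |
      P [seq ext_window r0 lo (w k) | k <- enum 'I_t]]|%:R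
   / (#|R| ^ (t * len))%:R.

Definition window_local (R : finType) t lo len (P : seq (config R) -> bool) :=
  forall f g : 'I_t -> config R,
  (forall k (j : 'I_len), f k (lo + (j : nat)%:Z) = g k (lo + (j : nat)%:Z)) ->
  P (map f (enum 'I_t)) = P (map g (enum 'I_t)).

Lemma window_prob_sub (R : finType) (r0 : R) t lo len lo' len' P :
  lo <= lo' -> lo' + len'%:Z <= lo + len%:Z -> window_local t lo' len' P ->
  window_prob r0 t lo len P = window_prob r0 t lo' len' P.
Proof.
move=> lo_le hi_le P_local.
have e_lt (j : 'I_len') : (`|(lo' - lo)%R| + j < len)%N by have := ltn_ord j; lia.
pose e j := Ordinal (e_lt j).
have e_inj : injective e by move=> j1 j2 /(congr1 val) /= /addnI /val_inj.
have ext_e g (j : 'I_len') : ext_window r0 lo g (lo' + (j : nat)%:Z) = g (e j).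
  by rewrite -(ext_window_offset r0 lo g (e j)) /=; congr ext_window; lia.
rewrite /window_prob -!card_ffun_window -(ratio_restrict_ffun (K := 'I_t) e_inj r0).
suff -> : [set w : {ffun 'I_t -> {ffun 'I_len -> R}} |
             P [seq ext_window r0 lo (w k) | k <- enum 'I_t]]
        = [set w | P [seq ext_window r0 lo' (restrict_ffun e w k) | k <- enum 'I_t]]
  by [].
apply/setP => w; rewrite !inE; apply: P_local => k j.
by rewrite ext_e ext_window_offset !ffunE.
Qed.

Lemma window_prob0 (R : finType) (r0 : R) lo len P :
  window_prob r0 0 lo len P = (P [::])%:R.
Proof.
rewrite /window_prob enum_ord0 /= mul0n expn0 divr1 card_set_indicator.
case: (P [::]) => /=; last by rewrite big1.
by rewrite sum1_card card_ffun card_ord expn0.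
Qed.

Lemma window_probS (R : finType) (r0 : R) t lo len P :
  window_prob r0 t.+1 lo len P =
  (\sum_(x : {ffun 'I_len -> R})
     window_prob r0 t lo len (fun ss => P (ext_window r0 lo x :: ss)))
  / (#|R| ^ len)%:R.
Proof.
pose X := {ffun 'I_len -> R}.
pose cons_ffun (p : X * {ffun 'I_t -> X}) : {ffun 'I_t.+1 -> X} :=
  [ffun k => if unlift ord0 k is Some k' then p.2 k' else p.1].
pose uncons_ffun (w : {ffun 'I_t.+1 -> X}) := (w ord0, [ffun k => w (lift ord0 k)]).
have consK : cancel cons_ffun uncons_ffun.
  move=> [x w]; rewrite /uncons_ffun /cons_ffun /= !ffunE unlift_none; congr pair.
  by apply/ffunP => k; rewrite !ffunE liftK.
have unconsK : cancel uncons_ffun cons_ffun.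
  move=> w; apply/ffunP => k; rewrite /cons_ffun ffunE /=.
  by case: unliftP => [k'|] -> //=; rewrite ffunE.
have card_split :
  #|[set w : {ffun 'I_t.+1 -> X} | P [seq ext_window r0 lo (w k) | k <- enum 'I_t.+1]]|
  = (\sum_(x : X) #|[set w : {ffun 'I_t -> X} |
        P (ext_window r0 lo x :: [seq ext_window r0 lo (w k) | k <- enum 'I_t])]|)%N.
  rewrite card_set_indicator (reindex cons_ffun); last first.
    by exists uncons_ffun => p _; [apply: consK | apply: unconsK].
  under [RHS]eq_bigr do rewrite card_set_indicator.
  rewrite pair_bigA /=; apply: eq_bigr => -[x w] _ /=.
  rewrite enum_ordSl /= -map_comp /cons_ffun ffunE unlift_none /=.
  by congr (nat_of_bool (P (_ :: _))); apply: eq_map => k /=; rewrite ffunE liftK.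
rewrite /window_prob card_split natr_sum -mulr_suml mulSn expnD natrM invfM mulrA.
by rewrite -!mulrA [X in _ * X]mulrC.
Qed.

Lemma sca_rad_ge (Q : finType) (A : sca Q) v :
  (v \in sca_V A) || (v \in sca_V' A) -> (`|v| <= sca_rad A)%N.
Proof.
move=> v_in; rewrite /sca_rad.
by apply: (@leq_bigmax_seq int _ xpredT (fun v => `|v|%N)); rewrite ?mem_cat.
Qed.

Lemma glob_local (Q : finType) (A : sca Q) N c c' s s' (p : int) :
  (sca_rad A <= N)%N ->
  (forall i, p - N%:Z <= i -> i <= p + N%:Z -> c i = c' i) ->
  (forall i, p - N%:Z <= i -> i <= p + N%:Z -> s i = s' i) ->
  @glob Q A c s p = @glob Q A c' s' p.
Proof.
move=> radN eq_c eq_s; rewrite /glob; congr sca_f; apply: eq_mktuple => j.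
- have := @sca_rad_ge Q A (tnth (in_tuple (sca_V A)) j).
  by rewrite mem_tnth => /(_ isT) v_le; apply: eq_c; lia.
- have := @sca_rad_ge Q A (tnth (in_tuple (sca_V' A)) j).
  by rewrite mem_tnth orbT => /(_ isT) v_le; apply: eq_s; lia.
Qed.

Lemma glob_iter_local (Q : finType) (A : sca Q) N (s0 : config (sca_R A)) ss :
  (sca_rad A <= N)%N ->
  forall ss' c c' (p : int), size ss = size ss' ->
  let W := (size ss * N)%N%:Z in
  (forall i, p - W <= i -> i <= p + W -> c i = c' i) ->
  (forall k i, (k < size ss)%N -> p - W <= i -> i <= p + W ->
      nth s0 ss k i = nth s0 ss' k i) ->
  @glob_iter Q A c ss p = @glob_iter Q A c' ss' p.
Proof.
move=> radN; elim: ss => [|s ss IH] [|s' ss'] c c' p //= => [_ eq_c _|[eq_size] eq_c eq_s].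
  by apply: eq_c; lia.
apply: IH => // [i lo_i i_hi|k i k_lt lo_i i_hi]; last first.
  by apply: (eq_s k.+1) => //; rewrite mulSn; lia.
apply: (glob_local radN) => j lo_j j_hi; first by apply: eq_c; rewrite mulSn; lia.
by apply: (eq_s 0%N) => //; rewrite mulSn; lia.
Qed.

Definition cyl_event (Q : finType) (A : sca Q) (c : config Q) (u : seq Q) (z : int)
    (ss : seq (config (sca_R A))) : bool :=
  in_cyl u z (glob_iter c ss).
Arguments cyl_event {Q} A c u z ss.

Lemma cyl_event_local (Q : finType) (A : sca Q) t c u z N : (sca_rad A <= N)%N ->
  window_local t (z - (t * N)%N%:Z) (size u + 2 * (t * N))%N (cyl_event A c u z).
Proof.
move=> radN f g eq_fg; apply: eq_forallb => x; congr (_ == _); have x_lt := ltn_ord x.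
apply: (glob_iter_local (s0 := fun _ => sca_r0 A) radN); rewrite ?size_map //.
move=> k i; rewrite -[Finite.enum _]enumT size_enum_ord => k_lt lo_i i_hi.
rewrite !(nth_map (Ordinal k_lt)) // -?enumT ?size_enum_ord //.
have [j ->] : exists j : 'I_(size u + 2 * (t * N))%N, i = z - (t * N)%N%:Z + (j : nat)%:Z.
  by apply: window_index; lia.
exact: eq_fg.
Qed.

Lemma St_window_prob (Q : finType) (A : sca Q) t c u z lo len :
  lo <= z - (t * sca_rad A)%N%:Z ->
  z + (size u)%:Z + (t * sca_rad A)%N%:Z <= lo + len%:Z ->
  St A t c u z = window_prob (sca_r0 A) t lo len (cyl_event A c u z).
Proof.
move=> lo_le hi_le; symmetry; apply: window_prob_sub; [lia | lia |].
exact: cyl_event_local.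
Qed.
Arguments St_window_prob {Q A t c u z} lo len.

Lemma St_local (Q : finType) (A : sca Q) t u z lo len c1 c2 :
  lo <= z - (t * sca_rad A)%N%:Z ->
  z + (size u)%:Z + (t * sca_rad A)%N%:Z <= lo + len%:Z ->
  (forall j : 'I_len, c1 (lo + (j : nat)%:Z) = c2 (lo + (j : nat)%:Z)) ->
  St A t c1 u z = St A t c2 u z.
Proof.
move=> lo_le hi_le eq_c; rewrite /St; congr (_%:R / _); apply: eq_card => w.
rewrite !inE; apply: eq_forallb => x; congr (_ == _); have x_lt := ltn_ord x.
apply: (glob_iter_local (s0 := fun _ => sca_r0 A) (leqnn _)); rewrite ?size_map //.
move=> i; rewrite -?enumT ?size_enum_ord => lo_i i_hi.
have [j ->] : exists j : 'I_len, i = lo + (j : nat)%:Z by apply: window_index; lia.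
exact: eq_c.
Qed.

Definition window_config (Q : finType) (q0 : Q) (z : int) (v : seq Q) : config Q :=
  fun x => nth q0 v `|(x - z)%R|%N.

Lemma sum_cyl_window (Q : finType) (q0 : Q) n z (c : config Q) (h : config Q -> rat) :
  (forall c1 c2, (forall j : 'I_n, c1 (z + (j : nat)%:Z) = c2 (z + (j : nat)%:Z)) ->
     h c1 = h c2) ->
  h c = \sum_(v : n.-tuple Q) (in_cyl v z c)%:R * h (window_config q0 z v).
Proof.
move=> h_local; pose v0 := [tuple c (z + (j : nat)%:Z) | j < n].
have nth_v0 (i : 'I_n) : nth q0 v0 i = c (z + (i : nat)%:Z) by rewrite nth_mktuple.
have in_cyl_v0 (v : n.-tuple Q) : in_cyl v z c = (v == v0).
  apply/forallP/eqP => [c_in|-> x]; last first.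
    by rewrite (tnth_nth q0) /= -[x : nat]/(nat_of_ord (cast_ord (size_tuple v0) x)) nth_v0.
  apply: val_inj; apply: (eq_from_nth (x0 := q0)); first by rewrite !size_tuple.
  move=> i i_lt; have := c_in (Ordinal i_lt); rewrite (tnth_nth q0) /= => /eqP <-.
  by rewrite -[i]/(nat_of_ord (cast_ord (size_tuple v) (Ordinal i_lt))) nth_v0.
under eq_bigr do rewrite in_cyl_v0.
rewrite (bigD1 v0) //= eqxx mul1r big1 ?addr0 => [|v /negbTE ->]; last by rewrite mul0r.
apply: h_local => j; rewrite /window_config.
by have -> : `|(z + (j : nat)%:Z - z)%R|%N = j by lia.
Qed.

Lemma St_chapman_kolmogorov (Q : finType) (A : sca Q) t N c u z (q0 : Q) :
  (sca_rad A <= N)%N ->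
  let w := z - (t * N)%N%:Z in
  St A t.+1 c u z = \sum_(v : (size u + 2 * (t * N))%N.-tuple Q)
     SF A c v w * St A t (window_config q0 w v) u z.
Proof.
move=> radN w; set n := (size u + 2 * (t * N))%N.
have tM_le : (t * sca_rad A <= t * N)%N by rewrite leq_mul2l radN orbT.
set lo := z - (t.+1 * N)%N%:Z; set len := (size u + 2 * (t.+1 * N))%N.
have St_lo c' t' : (t' <= t.+1)%N ->
    St A t' c' u z = window_prob (sca_r0 A) t' lo len (cyl_event A c' u z).
  move=> t'_le; have t'M_le : (t' * sca_rad A <= t.+1 * N)%N by apply: leq_mul.
  by apply: St_window_prob; rewrite /lo /len; lia.
have St_w c1 c2 : (forall j : 'I_n, c1 (w + (j : nat)%:Z) = c2 (w + (j : nat)%:Z)) ->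
    St A t c1 u z = St A t c2 u z.
  by apply: St_local; rewrite /w /n; lia.
have first_step (s : {ffun 'I_len -> sca_R A}) :
    window_prob (sca_r0 A) t lo len
      (fun ss => cyl_event A c u z (ext_window (sca_r0 A) lo s :: ss))
    = St A t (glob c (ext_window (sca_r0 A) lo s)) u z.
  by rewrite St_lo.
rewrite St_lo // window_probS.
under eq_bigr => s _ do rewrite first_step (sum_cyl_window q0 _ St_w).
rewrite exchange_big /= mulr_suml; apply: eq_bigr => v _.
rewrite -mulr_suml mulrAC; congr (_ * _).
have size_v : size v = n by rewrite size_tuple.
rewrite /SF (St_window_prob lo len); [|rewrite /lo /w; lia|rewrite /lo /len /w size_v; lia].
by rewrite window_probS; congr (_ / _); apply: eq_bigr => s _; rewrite window_prob0.
Qed.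

Theorem fact1 (Q : finType) (A B : sca Q) :
  (forall (c : config Q) (u : seq Q) (z : int), SF A c u z = SF B c u z) ->
  forall t : nat, (1 <= t)%N ->
  forall (c : config Q) (u : seq Q) (z : int), St A t c u z = St B t c u z.
Proof.
move=> SF_AB t _; elim: t => [|t IH] c u z.
  by rewrite !(St_window_prob z (size u)) ?window_prob0 //; lia.
pose N := maxn (sca_rad A) (sca_rad B).
rewrite (St_chapman_kolmogorov t c u z (c 0) (leq_maxl _ _ : (sca_rad A <= N)%N)).
rewrite (St_chapman_kolmogorov t c u z (c 0) (leq_maxr _ _ : (sca_rad B <= N)%N)).
by apply: eq_bigr => v _; rewrite SF_AB IH.
Qed.
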